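(* Let $p$ be an odd prime and $C_p*C_p=\langle a,b : a^p,b^p\rangle$. If $\gamma\in C_p*C_p$ is nontrivial and is not a power of $b$, then the element $\gamma[b,\gamma]$ has infinite order.
   Context: Commutator convention: $[x,y]=x^{-1}y^{-1}xy$, so $\gamma[b,\gamma]=\gamma b^{-1}\gamma^{-1}b\gamma$. *)

(* Concrete normal-form model of the free product
   C_p * C_p = < a, b | a^p, b^p >.
   An element is a reduced word: a list of syllables (g, e) where g = true
   stands for the generator a, g = false for b, the exponent e satisfies
   0 < e < p, and consecutive syllables use different generators.
   By the normal form theorem for free products, reduced words are in
   bijection with the elements of C_p * C_p, and the operations below are the
   group operations transported along this bijection. *)
From mathcomp Require Import all_boot.
Set Implicit Arguments. Unset Strict Implicit. Unset Printing Implicit Defensive.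

Definition syll := (bool * nat)%type.
Definition word := seq syll.

Fixpoint alternating (w : word) : bool :=
  match w with
  | x :: ((y :: _) as w') => (x.1 != y.1) && alternating w'
  | _ => true
  end.

Definition reduced (p : nat) (w : word) : bool :=
  all (fun x => (0 < x.2 < p)) w && alternating w.

Definition push (p : nat) (x : syll) (w : word) : word :=
  let g := x.1 in
  let e := x.2 %% p in
  if e == 0 then w else
  match w with
  | [::] => [:: (g, e)]
  | y :: w' =>
      if g == y.1 then
        let s := (e + y.2) %% p in
        if s == 0 then w' else (g, s) :: w'
      else (g, e) :: w
  end.

Definition fpmul (p : nat) (u v : word) : word := foldr (push p) v u.
Definition fpone : word := [::].
Definition fpinv (p : nat) (u : word) : word :=
  rev (map (fun x : syll => (x.1, p - x.2)) u).
Definition fpexp (p : nat) (u : word) (n : nat) : word :=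
  iter n (fpmul p u) fpone.

Definition gen_a : word := [:: (true, 1)].
Definition gen_b : word := [:: (false, 1)].

(* commutator convention [x,y] = x^-1 y^-1 x y *)
Definition fpcomm (p : nat) (x y : word) : word :=
  fpmul p (fpinv p x) (fpmul p (fpinv p y) (fpmul p x y)).

(* Since gamma is not a power of b, gamma = b^i d b^j with d a reduced word
   beginning and ending with a power of a, and then
   gamma [b, gamma] = b^i (d b^-1 d^-1 b d) b^j.
   Call a word weakly cyclically reduced when its first and last syllables
   either involve different generators or merge into a nontrivial syllable:
   the powers of such a word, and of its conjugates, are computed without any
   cancellation, so they are never trivial.
   If b^(i+j) <> 1, the word above is weakly cyclically reduced.  Otherwise it
   is conjugate to d b^-1 d^-1 b d; writing d = r s r^-1 with s weakly
   cyclically reduced or a single syllable, it is conjugate to s m s for some m,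
   which is again weakly cyclically reduced: for a single syllable a^e this
   uses that a^(2e) <> 1 because p is odd. *)

From mathcomp Require Import all_boot zify.
Set Implicit Arguments. Unset Strict Implicit. Unset Printing Implicit Defensive.

Definition head_gen (w : word) : option bool :=
  if w is x :: _ then Some x.1 else None.
Definition last_gen (w : word) : option bool := head_gen (rev w).

Definition joinable (u v : word) : bool :=
  if (last_gen u, head_gen v) is (Some g, Some g') then g != g' else true.

Lemma head_gen_cat u v : head_gen (u ++ v) = if u is [::] then head_gen v else head_gen u.
Proof. by case: u. Qed.

Lemma last_gen_cat u v : last_gen (u ++ v) = if v is [::] then last_gen u else last_gen v.
Proof. by rewrite /last_gen rev_cat; case: v => // x v; rewrite rev_cons; case: (rev v). Qed.

Lemma head_gen_neq0 u g : head_gen u = Some g -> u != [::].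
Proof. by case: u. Qed.

Lemma head_gen_catl u v : u != [::] -> head_gen (u ++ v) = head_gen u.
Proof. by case: u. Qed.

Lemma last_gen_catr u v : v != [::] -> last_gen (u ++ v) = last_gen v.
Proof. by rewrite last_gen_cat; case: v. Qed.

Lemma last_gen_rcons u x : last_gen (u ++ [:: x]) = Some x.1.
Proof. by rewrite last_gen_cat. Qed.

Lemma last_gen_cons x u : last_gen (x :: u) = if u is [::] then Some x.1 else last_gen u.
Proof. by rewrite -cat1s last_gen_cat. Qed.

Lemma joinable1 (x : syll) w : joinable [:: x] w = if w is y :: _ then x.1 != y.1 else true.
Proof. by case: w. Qed.

Lemma joinable_cons u x v : joinable u (x :: v) = joinable u [:: x].
Proof. by []. Qed.

Lemma joinable_catr u v w : v != [::] -> joinable u (v ++ w) = joinable u v.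
Proof. by rewrite /joinable head_gen_cat; case: v. Qed.

Lemma joinable_catl u v w : v != [::] -> joinable (u ++ v) w = joinable v w.
Proof. by rewrite /joinable last_gen_cat; case: v. Qed.

Lemma alternating_cat u v :
  alternating (u ++ v) = [&& alternating u, alternating v & joinable u v].
Proof.
elim: u => [|x u IH]; first by rewrite /joinable /=; case: (head_gen v); rewrite ?andbT.
case: u IH => [|z u] IH.
  by case: v {IH} => [|y v] //=; rewrite andbC.
have -> : alternating ((x :: z :: u) ++ v) = (x.1 != z.1) && alternating ((z :: u) ++ v).
  by [].
by rewrite IH -[x :: z :: u]cat1s joinable_catl // !andbA.
Qed.

Lemma reduced_cat p u v :
  reduced p (u ++ v) = [&& reduced p u, reduced p v & joinable u v].
Proof.
rewrite /reduced all_cat alternating_cat.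
by case: (all _ u) (all _ v) (alternating u) (alternating v) (joinable u v)
  => [] [] [] [] [].
Qed.

Lemma reduced_cons p x w :
  reduced p (x :: w) = [&& 0 < x.2 < p, reduced p w & joinable [:: x] w].
Proof. by rewrite -cat1s reduced_cat /reduced /= !andbT. Qed.

Section ReducedCat.
Variables (p : nat) (u v : word).
Hypothesis uv_red : reduced p (u ++ v).

Lemma reduced_catl : reduced p u.
Proof. by move: uv_red; rewrite reduced_cat => /and3P []. Qed.
Lemma reduced_catr : reduced p v.
Proof. by move: uv_red; rewrite reduced_cat => /and3P []. Qed.
Lemma reduced_cat_joinable : joinable u v.
Proof. by move: uv_red; rewrite reduced_cat => /and3P []. Qed.

End ReducedCat.

Lemma head_gen_fpinv p u : head_gen (fpinv p u) = last_gen u.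
Proof. by rewrite /fpinv /last_gen -map_rev; case: (rev u). Qed.

Lemma last_gen_fpinv p u : last_gen (fpinv p u) = head_gen u.
Proof. by rewrite /fpinv /last_gen revK; case: u. Qed.

Lemma fpinv_cons p x u : fpinv p (x :: u) = fpinv p u ++ [:: (x.1, p - x.2)].
Proof. by rewrite /fpinv /= rev_cons cats1. Qed.

Lemma fpinv_cat p u v : fpinv p (u ++ v) = fpinv p v ++ fpinv p u.
Proof. by rewrite /fpinv map_cat rev_cat. Qed.

Lemma fpinvK p u : reduced p u -> fpinv p (fpinv p u) = u.
Proof.
elim: u => [|[g e] u IH] //; rewrite reduced_cons => /and3P [/andP [_ ep] u_red _].
by rewrite fpinv_cons fpinv_cat IH //= subKn // ltnW.
Qed.

Lemma fpinv_reduced p u : 0 < p -> reduced p u -> reduced p (fpinv p u).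
Proof.
move=> p_gt0; elim: u => [|x u IH] //.
rewrite reduced_cons => /and3P [/andP [x_gt0 x_lt] u_red ux].
rewrite fpinv_cons reduced_cat IH // reduced_cons /= joinable1 !andbT.
rewrite ltn_subrL x_gt0 p_gt0 subn_gt0 x_lt /joinable last_gen_fpinv /=.
by move: ux; rewrite joinable1; case: u {IH u_red} => [|y u] //=; rewrite eq_sym.
Qed.

Lemma push_reduced p x w : 0 < p -> reduced p w -> reduced p (push p x w).
Proof.
move=> p_gt0; case: x => g e; rewrite /push /=.
case: eqP => [//|e_neq0].
case: w => [|y w] w_red.
  by rewrite reduced_cons joinable1 /= ltn_pmod // !andbT lt0n; apply/eqP.
move: w_red; rewrite reduced_cons => /and3P [y_ok w_red yw].
case: eqP => [g_eq|g_neq].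
  case: eqP => [//|s_neq0].
  rewrite reduced_cons w_red ltn_pmod // andbT lt0n.
  by apply/andP; split; [apply/eqP | move: yw; rewrite !joinable1 /= g_eq].
rewrite reduced_cons reduced_cons y_ok w_red yw ltn_pmod // lt0n joinable1 /= andbT.
by apply/andP; split; apply/eqP.
Qed.

Lemma fpmul_reduced p u v : 0 < p -> reduced p v -> reduced p (fpmul p u v).
Proof. by move=> p_gt0 v_red; elim: u => [|x u IH] //=; apply: push_reduced. Qed.

Lemma fpexpSr p u n : fpexp p u n.+1 = fpmul p u (fpexp p u n).
Proof. by []. Qed.

Lemma fpexp_reduced p u n : 0 < p -> reduced p (fpexp p u n).
Proof. by move=> p_gt0; elim: n => [|n IH] //=; apply: fpmul_reduced. Qed.

Lemma fpmul_cat p u v w : fpmul p (u ++ v) w = fpmul p u (fpmul p v w).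
Proof. by rewrite /fpmul foldr_cat. Qed.

Lemma push_reduced_cons p x w : reduced p (x :: w) -> push p x w = x :: w.
Proof.
case: x => g e; rewrite reduced_cons /= => /and3P [/andP [e_gt0 e_lt] _ xw].
rewrite /push /= modn_small // ifN -?lt0n //.
by case: w xw => [|y w] //= xw; rewrite ifN.
Qed.

Lemma fpmul_reduced_cat p u v : reduced p (u ++ v) -> fpmul p u v = u ++ v.
Proof.
elim: u => [|x u IH] //= uv_red.
by rewrite IH ?push_reduced_cons //; move: uv_red; rewrite reduced_cons => /and3P [].
Qed.

Lemma fpexp1 p u : reduced p u -> fpexp p u 1 = u.
Proof. by move=> u_red; rewrite /= /fpone fpmul_reduced_cat ?cats0. Qed.

Lemma push_opp p x w : 0 < x.2 < p -> push p (x.1, p - x.2) (x :: w) = w.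
Proof.
case: x => g e /= /andP [e_gt0 e_lt]; rewrite /push /=.
have opp_lt : p - e < p by rewrite ltn_subrL e_gt0 (leq_ltn_trans _ e_lt).
have opp_neq0 : p - e != 0 by rewrite -lt0n subn_gt0.
by rewrite (modn_small opp_lt) (negbTE opp_neq0) eqxx subnK ?modnn // ltnW.
Qed.

Lemma fpmul_fpinv_cat p c r : reduced p (c ++ r) -> fpmul p (fpinv p c) (c ++ r) = r.
Proof.
elim: c => [|x c IH] //=; rewrite reduced_cons => /and3P [x_ok cr_red _].
by rewrite fpinv_cons fpmul_cat /= push_opp // IH.
Qed.

Definition bpow (p e : nat) : word :=
  if e %% p == 0 then [::] else [:: (false, e %% p)].

Lemma bpow_mod p e : bpow p (e %% p) = bpow p e.
Proof. by rewrite /bpow modn_mod. Qed.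

Lemma bpow0 p : bpow p 0 = [::].
Proof. by rewrite /bpow mod0n. Qed.

Lemma bpow_small p e : 0 < e < p -> bpow p e = [:: (false, e)].
Proof. by case/andP=> e_gt0 e_lt; rewrite /bpow modn_small // ifN -?lt0n. Qed.

Lemma bpow_add_mod0 p k z : z %% p = 0 -> bpow p (k + z) = bpow p k.
Proof. by move=> z0; rewrite -bpow_mod -modnDmr z0 addn0 bpow_mod. Qed.

Lemma bpow_reduced p e : 0 < p -> reduced p (bpow p e).
Proof.
move=> p_gt0; rewrite /bpow; case: eqP => // e_neq0.
by rewrite reduced_cons joinable1 /= ltn_pmod // !andbT lt0n; apply/eqP.
Qed.

Lemma head_gen_bpow p e : head_gen (bpow p e) = if e %% p == 0 then None else Some false.
Proof. by rewrite /bpow; case: eqP. Qed.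

Lemma modn_add_opp p i : 0 < p -> (i + (p - i %% p)) %% p = 0.
Proof.
move=> p_gt0; rewrite {1}(divn_eq i p) -addnA subnKC ?modnDr ?modnMl //.
by rewrite ltnW ?ltn_pmod.
Qed.

Lemma fpinv_bpow p e : 0 < p -> fpinv p (bpow p e) = bpow p (p - e %% p).
Proof.
move=> p_gt0; rewrite /bpow; case: eqP => [->|e_neq0]; first by rewrite subn0 modnn.
have opp_lt : p - e %% p < p by rewrite ltn_subrL p_gt0 andbT lt0n; apply/eqP.
by rewrite (modn_small opp_lt) ifN // -lt0n subn_gt0 ltn_pmod.
Qed.

Lemma fpmul_bpow p e e' r : 0 < p -> reduced p r -> head_gen r != Some false ->
  fpmul p (bpow p e) (bpow p e' ++ r) = bpow p (e + e') ++ r.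
Proof.
move=> p_gt0 r_red r_hd.
rewrite -(bpow_mod p (e + e')) -modnDm -(bpow_mod p e) -(bpow_mod p e').
have := ltn_pmod e p_gt0; have := ltn_pmod e' p_gt0.
move: (e %% p) (e' %% p) => a b b_lt a_lt.
rewrite /bpow (modn_small a_lt) (modn_small b_lt).
have [->|a_neq0] := eqVneq a 0; first by rewrite add0n !modn_mod (modn_small b_lt).
rewrite /fpmul /= /push /= (modn_small a_lt) (negbTE a_neq0).
have [->|b_neq0] := eqVneq b 0; last by rewrite /= !modn_mod; case: ifP.
rewrite addn0 !(modn_small a_lt) (negbTE a_neq0) /=.
by case: r r_red r_hd => [|[[] y] r].
Qed.

Lemma fpmul_bpow_cat p e r : 0 < p -> reduced p r -> head_gen r != Some false ->
  fpmul p (bpow p e) r = bpow p e ++ r.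
Proof.
by move=> p_gt0 r_red r_hd; have := fpmul_bpow e 0 p_gt0 r_red r_hd; rewrite bpow0 addn0.
Qed.

Lemma fpexp_gen_b p k : 0 < p -> fpexp p gen_b k = bpow p k.
Proof.
move=> p_gt0; elim: k => [|k IH]; first by rewrite bpow0.
rewrite fpexpSr IH -[bpow p k]cats0.
have [->|p_gt1] := eqVneq p 1; first by rewrite /bpow !modn1.
have -> : gen_b = bpow p 1 by rewrite bpow_small //= ltn_neqAle p_gt0 andbT eq_sym.
by rewrite fpmul_bpow // cats0 add1n.
Qed.

Lemma reduced_bpow_decompl p g : reduced p g -> (forall k, g <> bpow p k) ->
  exists i g', [/\ g = bpow p i ++ g', reduced p g' & head_gen g' = Some true].
Proof.
case: g => [|[[] e] g] g_red not_bpow; first by have := not_bpow 0; rewrite bpow0.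
  by exists 0, ((true, e) :: g); rewrite bpow0.
move: g_red; rewrite reduced_cons joinable1 /= => /and3P [e_ok g_red eg].
exists e, g; rewrite bpow_small //; split => //.
case: g not_bpow g_red eg => [|[[] f] g] //= not_bpow.
by have := not_bpow e; rewrite bpow_small.
Qed.

Lemma reduced_bpow_decompr p g : reduced p g -> head_gen g = Some true ->
  exists j d, [/\ g = d ++ bpow p j, reduced p d,
                  head_gen d = Some true & last_gen d = Some true].
Proof.
case/lastP: g => [//|d [[] e]] g_red g_hd; rewrite -cats1 in g_red g_hd *.
  by exists 0, (d ++ [:: (true, e)]); rewrite bpow0 cats0 last_gen_rcons.
have d_neq0 : d != [::] by case: d g_hd {g_red}.
move: g_red; rewrite reduced_cat => /and3P [d_red e_red de].
move: e_red; rewrite reduced_cons => /andP [e_ok _].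
exists e, d; rewrite bpow_small //; split => //.
  by move: g_hd; rewrite head_gen_cat; case: d d_neq0 {d_red de}.
move: de; clear g_hd d_red.
by case/lastP: d d_neq0 => [//|d [[] f] _]; rewrite -cats1 /joinable last_gen_rcons.
Qed.

Definition comm_core (p : nat) (d : word) : word :=
  d ++ [:: (false, p - 1)] ++ fpinv p d ++ [:: (false, 1)] ++ d.

Lemma fpmul_fpcomm_b p i j d : 1 < p ->
    reduced p d -> head_gen d = Some true -> last_gen d = Some true ->
  let g := bpow p i ++ d ++ bpow p j in
  fpmul p g (fpcomm p gen_b g) = bpow p i ++ comm_core p d ++ bpow p j.
Proof.
move=> p_gt1 d_red d_hd d_tl g; have p_gt0 : 0 < p by apply: ltnW.
have d_neq0 := head_gen_neq0 d_hd.
have b1 : bpow p 1 = [:: (false, 1)] by rewrite bpow_small.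
have bV : bpow p (p - 1) = [:: (false, p - 1)].
  by rewrite bpow_small // subn_gt0 p_gt1 ltn_subrL p_gt0.
have gen_bV : fpinv p gen_b = bpow p (p - 1) by rewrite bV.
set r := d ++ bpow p j.
have r_red : reduced p r.
  by rewrite reduced_cat d_red bpow_reduced //= /joinable d_tl head_gen_bpow; case: eqP.
have r_hd : head_gen r = Some true by rewrite head_gen_catl.
have bg : fpmul p gen_b g = bpow p (1 + i) ++ r by rewrite /gen_b -b1 fpmul_bpow ?r_hd.
set s := fpinv p d ++ [:: (false, 1)] ++ r.
have s_red : reduced p s.
  rewrite reduced_cat fpinv_reduced // reduced_cons r_red joinable1 /=.
  rewrite /joinable last_gen_fpinv d_hd p_gt1 /=.
  by move: r_hd; case: (r) => [|[g' e] r'] //= [->].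
have s_hd : head_gen s = Some true.
  have dV_neq0 : fpinv p d != [::] by rewrite -size_eq0 size_rev size_map size_eq0.
  by rewrite head_gen_catl // head_gen_fpinv.
have gVbg : fpmul p (fpinv p g) (fpmul p gen_b g) = bpow p (p - j %% p) ++ s.
  rewrite bg !fpinv_cat !fpmul_cat !fpinv_bpow // fpmul_bpow ?r_hd //.
  rewrite [p - _ + _]addnC -addnA bpow_add_mod0 ?modn_add_opp // b1.
  by rewrite (fpmul_reduced_cat s_red) fpmul_bpow_cat // -/s s_hd.
have t_red : reduced p (d ++ [:: (false, p - 1)] ++ s).
  rewrite reduced_cat d_red reduced_cons s_red /joinable /= s_hd d_tl /=.
  by rewrite subn_gt0 p_gt1 ltn_subrL p_gt0.
rewrite /fpcomm gVbg gen_bV fpmul_bpow ?s_hd // fpmul_cat fpmul_cat.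
rewrite fpmul_bpow ?s_hd // addnCA bpow_add_mod0 ?modn_add_opp // bV.
rewrite (fpmul_reduced_cat t_red) fpmul_bpow_cat ?head_gen_catl ?d_hd //.
by rewrite /comm_core /s /r -!catA.
Qed.

Lemma fpexp_conj_joinable p c y : 0 < p -> reduced p (c ++ y ++ fpinv p c) ->
    y != [::] -> joinable y y ->
  forall n, exists r, fpexp p (c ++ y ++ fpinv p c) n.+1 = c ++ y ++ r ++ fpinv p c.
Proof.
set x := c ++ _ => p_gt0 x_red y_neq0 yy; elim=> [|n [r IH]].
  by exists [::]; rewrite fpexp1.
have xn_red := fpexp_reduced x n.+1 p_gt0; rewrite IH in xn_red.
have yyr_red : reduced p (y ++ y ++ r ++ fpinv p c).
  rewrite reduced_cat (reduced_catl (reduced_catr x_red)) (reduced_catr xn_red).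
  by rewrite joinable_catr.
have cyyr_red : reduced p (c ++ y ++ y ++ r ++ fpinv p c).
  rewrite reduced_cat (reduced_catl x_red) yyr_red joinable_catr //.
  by have := reduced_cat_joinable x_red; rewrite joinable_catr.
rewrite fpexpSr IH {1}/x !fpmul_cat fpmul_fpinv_cat // (fpmul_reduced_cat yyr_red).
by rewrite (fpmul_reduced_cat cyyr_red); exists (y ++ r); rewrite !catA.
Qed.

Lemma push_merge p l h r : 0 < l.2 < p -> l.1 = h.1 -> (l.2 + h.2) %% p != 0 ->
  push p l (h :: r) = (l.1, (l.2 + h.2) %% p) :: r.
Proof.
case: l => g e; case: h => g' e' /= /andP [e_gt0 e_lt] <- s_neq0.
by rewrite /push /= modn_small // ifN -?lt0n // eqxx ifN.
Qed.

Lemma fpexp_conj_merge p c h m l : 0 < p ->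
    reduced p (c ++ h :: m ++ l :: fpinv p c) -> h.1 = l.1 -> (l.2 + h.2) %% p != 0 ->
  forall n, exists r,
    fpexp p (c ++ h :: m ++ l :: fpinv p c) n.+1 = c ++ h :: r ++ l :: fpinv p c.
Proof.
set x := c ++ _ => p_gt0 x_red hl s_neq0; elim=> [|n [r IH]].
  by exists m; rewrite fpexp1.
have xn_red := fpexp_reduced x n.+1 p_gt0; rewrite IH in xn_red.
have Ex : x = c ++ (h :: m) ++ [:: l] ++ fpinv p c by [].
rewrite Ex in x_red.
have l_ok : 0 < l.2 < p.
  have := reduced_catl (reduced_catr (reduced_catr x_red)).
  by rewrite reduced_cons => /andP [].
set l' := (l.1, (l.2 + h.2) %% p).
have l'r_red : reduced p (l' :: r ++ l :: fpinv p c).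
  by rewrite -push_merge //; apply: push_reduced => //; apply: reduced_catr xn_red.
have hml'r_red : reduced p ((h :: m) ++ l' :: r ++ l :: fpinv p c).
  rewrite reduced_cat l'r_red (reduced_catl (reduced_catr x_red)) joinable_cons.
  by have := reduced_cat_joinable (reduced_catr x_red); rewrite /joinable.
have chml'r_red : reduced p (c ++ (h :: m) ++ l' :: r ++ l :: fpinv p c).
  rewrite reduced_cat (reduced_catl x_red) hml'r_red joinable_cons.
  by have := reduced_cat_joinable x_red; rewrite joinable_cons.
rewrite fpexpSr IH {1}Ex !fpmul_cat fpmul_fpinv_cat -?Ex //.
rewrite [fpmul p [:: l] _]/= push_merge // (fpmul_reduced_cat hml'r_red).
rewrite (fpmul_reduced_cat chml'r_red); by exists (m ++ l' :: r); rewrite /= -catA.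
Qed.

Definition weakly_cyc_reduced (p : nat) (y : word) : Prop :=
  (y != [::] /\ joinable y y) \/
  exists h m l, [/\ y = h :: m ++ [:: l], h.1 = l.1 & (l.2 + h.2) %% p != 0].

Lemma fpexp_conj_neq1 p c y n : 0 < p -> reduced p (c ++ y ++ fpinv p c) ->
  weakly_cyc_reduced p y -> fpexp p (c ++ y ++ fpinv p c) n.+1 <> [::].
Proof.
move=> p_gt0 x_red [[y_neq0 yy] | [h [m [l [Ey hl s_neq0]]]]].
  have [r ->] := fpexp_conj_joinable p_gt0 x_red y_neq0 yy n.
  by clear x_red; case: c; case: y y_neq0 yy.
have Ex : c ++ y ++ fpinv p c = c ++ h :: m ++ l :: fpinv p c by rewrite Ey /= -catA.
rewrite Ex in x_red *.
by have [r ->] := fpexp_conj_merge p_gt0 x_red hl s_neq0 n; clear x_red Ex; case: c.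
Qed.

Lemma addn_modn_eq0 p a b : 0 < a < p -> 0 < b < p -> (b + a) %% p = 0 -> b = p - a.
Proof.
move=> /andP [a_gt0 a_lt] /andP [b_gt0 b_lt] /eqP /dvdnP [k Ek].
by case: k Ek => [|[|k]] Ek; lia.
Qed.

Lemma reduced_conj_decomp p d : 0 < p -> reduced p d -> d != [::] ->
  exists r s, d = r ++ s ++ fpinv p r /\
    ((exists x, s = [:: x]) \/ weakly_cyc_reduced p s).
Proof.
move=> p_gt0; have [n] := ubnP (size d); elim: n d => // n IH [//|h d].
case/lastP: d => [|m l] d_size d_red _.
  by exists [::], [:: h]; split; [|left; exists h].
rewrite -cats1 in d_size d_red *.
have [hl | hl_neq] := eqVneq h.1 l.1; last first.
  exists [::], (h :: m ++ [:: l]); split; first by rewrite cats0.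
  right; left; split => //.
  by rewrite /joinable -cat_cons last_gen_rcons /= eq_sym.
have [s_eq0 | s_neq0] := eqVneq ((l.2 + h.2) %% p) 0; last first.
  exists [::], (h :: m ++ [:: l]); split; first by rewrite cats0.
  by right; right; exists h, m, l.
move: d_red; rewrite reduced_cons => /and3P [h_ok ml_red hml].
have m_neq0 : m != [::] by case: m hml {ml_red d_size} => //; rewrite /joinable /= hl eqxx.
have l_ok : 0 < l.2 < p by move: (reduced_catr ml_red); rewrite reduced_cons => /andP [].
have El2 := addn_modn_eq0 h_ok l_ok s_eq0.
have m_size : size m < n by move: d_size; rewrite /= size_cat addn1 ltnS; apply: leq_trans.
have [r [s [Em s_cyc]]] := IH m m_size (reduced_catl ml_red) m_neq0.
exists (h :: r), s; split => //.
rewrite fpinv_cons Em /= -!catA; congr (_ :: _ ++ _ ++ _ ++ _).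
by move: hl El2; case: (l) => g e /= <- ->.
Qed.

Lemma double_modn_neq0 p a : prime p -> odd p -> 0 < a < p -> (a + a) %% p != 0.
Proof.
move=> p_pr p_odd /andP [a_gt0 a_lt].
have p_gt2 : 2 < p.
  by move: (prime_gt1 p_pr) p_odd; case: (p) => [|[|[|q]]].
by rewrite -/(p %| a + a) addnn -mul2n Euclid_dvdM // negb_or !gtnNdvd.
Qed.

Lemma weakly_cyc_reduced_sandwich p s m : prime p -> odd p -> reduced p s ->
    (exists x, s = [:: x]) \/ weakly_cyc_reduced p s ->
  weakly_cyc_reduced p (s ++ m ++ s).
Proof.
move=> p_pr p_odd s_red [[x Es] | [[s_neq0 ss] | [h [m' [l [Es hl hl_neq0]]]]]].
- right; exists x, m, x; split; rewrite ?Es //.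
  apply: double_modn_neq0 => //.
  by move: s_red; rewrite Es reduced_cons => /andP [].
- left; split; first by case: (s) s_neq0.
  by rewrite joinable_catr // catA joinable_catl.
- right; exists h, (m' ++ [:: l] ++ m ++ h :: m'), l.
  by split; rewrite ?Es // /= -!catA /= -!catA.
Qed.

Lemma comm_core_conj p r s : reduced p r ->
  exists m, comm_core p (r ++ s ++ fpinv p r) = r ++ (s ++ m ++ s) ++ fpinv p r.
Proof.
move=> r_red; exists (fpinv p r ++ [:: (false, p - 1)] ++ r ++ fpinv p s ++
                      fpinv p r ++ [:: (false, 1)] ++ r).
by rewrite /comm_core !fpinv_cat fpinvK // -!catA.
Qed.

Lemma weakly_cyc_reduced_bpow p i j t : (i + j) %% p != 0 ->
    head_gen t = Some true -> last_gen t = Some true ->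
  weakly_cyc_reduced p (bpow p i ++ t ++ bpow p j).
Proof.
move=> ij_neq0 t_hd t_tl.
have t_neq0 := head_gen_neq0 t_hd.
rewrite /bpow; case: eqP => [i0 | /eqP i_neq0]; case: eqP => [j0 | /eqP j_neq0].
- by move: ij_neq0; rewrite -modnDm i0 j0 mod0n.
- left; split; first by case: (t) t_neq0.
  by rewrite /joinable last_gen_rcons /= head_gen_catl // t_hd.
- left; split => //.
  by rewrite cats0 /joinable last_gen_cons; case: (t) t_neq0 t_tl => //= x t' _ ->.
- right; exists (false, i %% p), t, (false, j %% p).
  by split => //=; rewrite addnC modnDm.
Qed.

Lemma bpow_eq_fpinv p i j : 0 < p -> (i + j) %% p = 0 -> bpow p j = fpinv p (bpow p i).
Proof.
move=> p_gt0 ij0; rewrite fpinv_bpow // -(bpow_add_mod0 j (modn_add_opp i p_gt0)).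
by rewrite addnA [j + i]addnC -bpow_mod -modnDml ij0 add0n bpow_mod.
Qed.

Lemma fpexp_comm_core_neq1 p i j d n : prime p -> odd p ->
    head_gen d = Some true -> last_gen d = Some true ->
    reduced p (bpow p i ++ comm_core p d ++ bpow p j) ->
  fpexp p (bpow p i ++ comm_core p d ++ bpow p j) n.+1 <> [::].
Proof.
move=> p_pr p_odd d_hd d_tl x_red; have p_gt0 := prime_gt0 p_pr.
have d_neq0 := head_gen_neq0 d_hd.
have [ij0 | ij_neq0] := eqVneq ((i + j) %% p) 0; last first.
  have x_cyc : weakly_cyc_reduced p (bpow p i ++ comm_core p d ++ bpow p j).
    apply: weakly_cyc_reduced_bpow => //; rewrite /comm_core.
      by rewrite head_gen_catl.
    by rewrite !catA last_gen_catr.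
  have := fpexp_conj_neq1 (c := [::]) (n := n) p_gt0 _ x_cyc.
  by rewrite [fpinv _ _]/= cats0 => /(_ x_red).
have d_red : reduced p d := reduced_catl (reduced_catl (reduced_catr x_red)).
have [r [s [Ed s_cyc]]] := reduced_conj_decomp p_gt0 d_red d_neq0.
rewrite Ed in d_red; have [m Ecore] := comm_core_conj s (reduced_catl d_red).
have Ex : bpow p i ++ comm_core p d ++ bpow p j =
          (bpow p i ++ r) ++ (s ++ m ++ s) ++ fpinv p (bpow p i ++ r).
  by rewrite Ed Ecore (bpow_eq_fpinv p_gt0 ij0) fpinv_cat -!catA.
have s_red : reduced p s := reduced_catl (reduced_catr d_red).
have x_cyc := weakly_cyc_reduced_sandwich m p_pr p_odd s_red s_cyc.
by rewrite Ex in x_red *; apply: fpexp_conj_neq1 p_gt0 x_red x_cyc.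
Qed.

Theorem mainTheorem14 (p : nat) (gamma : word) :
  prime p -> odd p ->
  reduced p gamma ->
  gamma <> fpone ->
  (forall k : nat, gamma <> fpexp p gen_b k) ->
  forall n : nat, 0 < n ->
    fpexp p (fpmul p gamma (fpcomm p gen_b gamma)) n <> fpone.
Proof.
(* [gamma <> fpone] is the case [k = 0] of the next hypothesis. *)
move=> p_pr p_odd g_red _ g_not_bpow [//|n] _.
have p_gt0 := prime_gt0 p_pr.
have x_red : reduced p (fpmul p gamma (fpcomm p gen_b gamma)).
  by rewrite /fpcomm; do !apply: fpmul_reduced.
have {}g_not_bpow k : gamma <> bpow p k by rewrite -fpexp_gen_b.
have [i [g' [Eg g'_red g'_hd]]] := reduced_bpow_decompl g_red g_not_bpow.
have [j [d [Eg' d_red d_hd d_tl]]] := reduced_bpow_decompr g'_red g'_hd.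
subst gamma g'; rewrite fpmul_fpcomm_b ?prime_gt1 // in x_red *.
exact: fpexp_comm_core_neq1.
Qed.
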